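(* At every time during the execution of DASH (described in the context) on an initially connected graph, against any sequence of node deletions, the graph $G'$ formed by the surviving nodes and the healing edges added by DASH is a forest.
   Context: Model: a network is an undirected graph. Initially it is a connected graph $G_0$ on $n$ nodes. In each round an adversary deletes one surviving node $v$ together with its incident edges, and then DASH adds edges. $G$ denotes the current network; $E'$ is the set of healing edges added so far by DASH whose endpoints both survive; $G'=(V(G),E')$. $N(u,G)$, $N(u,G')$ denote neighbor sets in $G$, $G'$; $\delta(u)=\deg_G(u)-\deg_{G_0}(u)$. DASH: initially every node receives an ID drawn independently and uniformly from $[0,1]$ (its initial ID). When $v$ is deleted (quantities evaluated just before the deletion): partition the nodes of $N(v,G)$ whose current ID differs from that of $v$ into classes of equal current ID, and let $UN(v,G)$ consist of one node per class, the one with lowest initial ID. Let $S=UN(v,G)\cup N(v,G')$. Order $S$ by increasing $\delta$ and place the nodes in this order into a complete binary tree with $|S|$ positions, filled level by level from the top and left to right; add to the network and to $E'$ the edge between each node of $S$ and the node at its parent position. Then all nodes of the connected component of $G'$ containing $S$ set their ID to the minimum current ID among nodes of $S$. *)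

From HB Require Import structures.
From mathcomp Require Import all_boot all_order all_algebra.
From mathcomp Require Import reals.
Set Implicit Arguments. Unset Strict Implicit. Unset Printing Implicit Defensive.
Import Order.TTheory GRing.Theory Num.Theory.
Local Open Scope ring_scope.

Section DASH.
Variables (T : finType) (R : realType).
(* initial network G0 (symmetric irreflexive relation on the node set T) *)
Variable G0 : rel T.
Variable id0 : T -> R.

Record state := State {
  alive : {set T};
  healed : {set T * T};     (* all healing edges ever added (both orientations) *)
  cid : T -> R
}.

Definition adjG (s : state) : rel T := fun x y =>
  [&& x \in alive s, y \in alive s & (G0 x y || ((x, y) \in healed s))].

Definition adjGp (s : state) : rel T := fun x y =>
  [&& x \in alive s, y \in alive s & (x, y) \in healed s].

Definition nbrG (s : state) (u : T) : {set T} := [set w | adjG s u w].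
Definition nbrGp (s : state) (u : T) : {set T} := [set w | adjGp s u w].

Definition delta (s : state) (u : T) : int :=
  (#|nbrG s u|%:Z - #|[set w | G0 u w]|%:Z)%R.

(* UN(v,G): one node per class of equal current ID (different from v's),
   namely the one of lowest initial ID in that class *)
Definition UN (s : state) (v : T) : {set T} :=
  [set u in nbrG s v | (cid s u != cid s v) &&
     [forall w in nbrG s v, (cid s w == cid s u) ==> (id0 u <= id0 w)]].

Definition Sset (s : state) (v : T) : {set T} := UN s v :|: nbrGp s v.

(* healing edges of the complete binary tree (heap layout) on the sequence q:
   position i >= 1 has parent position (i-1)/2 *)
Definition tree_edges (q : seq T) : {set T * T} :=
  [set e | [exists i : 'I_(size q),
     (0 < (i : nat))%N &&
     let a := nth e.1 q i in let b := nth e.1 q ((i : nat).-1./2) in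
     (e == (a, b)) || (e == (b, a))]].

(* one round: the adversary deletes v, DASH heals; q is the order of S by
   increasing delta (ties broken arbitrarily), c' the updated IDs *)
Definition dash_step (s s' : state) : Prop :=
  exists v : T, exists q : seq T,
    [/\ v \in alive s,
        uniq q, [set x in q] = Sset s v &
        sorted (fun a b => delta s a <= delta s b) q] /\
    [/\ alive s' = alive s :\ v,
        healed s' = healed s :|: tree_edges q &
        (* ID update: the component of the new G' containing S gets the
           minimum current ID among nodes of S; others keep their ID *)
        forall x : T,
          if [exists u in Sset s v, connect (adjGp s') u x]
          then exists2 m, m \in Sset s v &
                 (cid s' x = cid s m /\
                  forall u, u \in Sset s v -> cid s m <= cid s u)
          else cid s' x = cid s x].

Definition init_state : state := State [set: T] set0 id0.

Inductive reachable : state -> Prop :=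
  | reach_init : reachable init_state
  | reach_step s s' : reachable s -> dash_step s s' -> reachable s'.

End DASH.

Definition forest (T : finType) (e : rel T) : Prop :=
  forall p : seq T, uniq p -> (2 < size p)%N -> ~~ cycle e p.

From mathcomp Require Import all_boot all_order all_algebra.
From mathcomp Require Import reals.
Set Implicit Arguments. Unset Strict Implicit. Unset Printing Implicit Defensive.
Import Order.TTheory.

(* Along the execution we maintain that healing edges are symmetric and
   loop-free, that current IDs are constant on the components of G', and that
   G' is a forest. When v is deleted, the nodes of S lie in pairwise distinct
   components of G' - v: the nodes of UN(v,G) carry pairwise distinct IDs, all
   different from the ID of v, while the G'-neighbours of v carry the ID of v,
   and two of them joined in G' - v would close a cycle through v. The new
   edges form a tree on S (a heap), and gluing a tree on S onto a forest whose
   components each contain at most one node of S yields a forest. Components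
   of the new G' avoiding S are components of the old one, so the ID update
   keeps IDs constant on components. *)

Lemma next_next_neq (T : eqType) (p : seq T) (x : T) :
  uniq p -> 2 < size p -> x \in p -> next p (next p x) != x.
Proof.
move=> up p_gt2 /rot_to [i l E]; rewrite -!(next_rot i up) E.
have : uniq (x :: l) by rewrite -E rot_uniq.
have : 2 < size (x :: l) by rewrite -E size_rot.
case: l {E} => [|a [|b l]] //= _.
rewrite !inE !negb_or => /andP [/and3P [xa xb _] /andP [/andP [ab _] _]].
by rewrite eqxx [a == x]eq_sym (negbTE xa) eqxx eq_sym.
Qed.

Section HeapTree.
Variable T : finType.
Implicit Types (q p : seq T) (x y : T).

Lemma heap_parent_lt i : 0 < i -> i.-1./2 < i.
Proof.
move=> i_gt0; rewrite -(prednK i_gt0) ltnS leq_half_double -addnn.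
exact: leq_trans (leq_addr _ _) (leqnSn _).
Qed.

Lemma tree_edgesP q x y : (x, y) \in tree_edges q ->
  exists i, [/\ 0 < i, i < size q &
    (x = nth x q i /\ y = nth x q i.-1./2) \/
    (y = nth x q i /\ x = nth x q i.-1./2)].
Proof.
rewrite inE => /existsP [[i i_lt]] /= /andP [i_gt0 /orP [] /eqP [-> ->]];
  exists i; split => //; [left|right]; split => //; apply: set_nth_default;
  by rewrite ?i_lt // (ltn_trans (heap_parent_lt i_gt0) i_lt).
Qed.

Lemma tree_edges_mem q x y : (x, y) \in tree_edges q -> (x \in q) && (y \in q).
Proof.
case/tree_edgesP => i [i_gt0 i_lt [[-> ->]|[-> ->]]];
  by rewrite !mem_nth ?i_lt // (ltn_trans (heap_parent_lt i_gt0) i_lt).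
Qed.

Lemma tree_edges_sym q x y : (x, y) \in tree_edges q -> (y, x) \in tree_edges q.
Proof.
case/tree_edgesP => i [i_gt0 i_lt xy]; rewrite inE; apply/existsP.
exists (Ordinal i_lt); rewrite /= i_gt0 /=.
have par_lt := ltn_trans (heap_parent_lt i_gt0) i_lt.
rewrite (set_nth_default x y i_lt) (set_nth_default x y par_lt).
by case: xy => [[<- <-]|[<- <-]]; rewrite eqxx ?orbT.
Qed.

Lemma tree_edges_irr q x : uniq q -> (x, x) \notin tree_edges q.
Proof.
move=> uq; apply/negP => /tree_edgesP [i [i_gt0 i_lt xx]].
have par_lt := ltn_trans (heap_parent_lt i_gt0) i_lt.
have /eqP : nth x q i = nth x q i.-1./2 by case: xx => [[<- <-]|[<- <-]].
rewrite nth_uniq // => /eqP eq_i.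
by move: (heap_parent_lt i_gt0); rewrite -eq_i ltnn.
Qed.

Lemma tree_edges_index q x y : uniq q -> (x, y) \in tree_edges q ->
  (0 < index x q /\ index y q = (index x q).-1./2) \/
  (0 < index y q /\ index x q = (index y q).-1./2).
Proof.
move=> uq /tree_edgesP [i [i_gt0 i_lt xy]].
have par_lt := ltn_trans (heap_parent_lt i_gt0) i_lt.
by case: xy => [[-> ->]|[-> ->]]; rewrite !index_uniq //; [left|right].
Qed.

(* In a cycle of heap edges, the node x of largest position would have both
   cycle neighbours as its heap parent. *)
Lemma tree_edges_forest q : uniq q -> forest (fun x y => (x, y) \in tree_edges q).
Proof.
move=> uq p up p_gt2; apply/negP => cp.
have [x0 x0p] : exists x0, x0 \in p.
  by case: p p_gt2 {up cp} => // x0 ? _; exists x0; rewrite mem_head.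
case: (arg_maxnP (fun z => index z q) (x0p : x0 \in mem p)) => x xp x_max.
have parent y : y \in p -> (x, y) \in tree_edges q -> index y q = (index x q).-1./2.
  move=> yp /(tree_edges_index uq) [[//]|[y_gt0 idx_x]].
  have := x_max y yp; rewrite idx_x => /leq_ltn_trans/(_ (heap_parent_lt y_gt0)).
  by rewrite ltnn.
have xn := next_cycle cp xp; have /tree_edges_sym px := prev_cycle cp xp.
have nq := andP (tree_edges_mem xn); have pq := andP (tree_edges_mem px).
have next_prev_eq : next p x = prev p x.
  rewrite -(nth_index x nq.2) -(nth_index x pq.2).
  by rewrite (parent _ _ xn) ?(parent _ _ px) ?mem_next ?mem_prev.
by have := next_next_neq up p_gt2 xp; rewrite next_prev_eq next_prev ?eqxx.
Qed.

End HeapTree.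

Lemma forest_sub (T : finType) (e e' : rel T) : subrel e e' -> forest e' -> forest e.
Proof.
move=> ee' e'_forest p up p_gt2.
by apply: contraNN (e'_forest p up p_gt2); apply: sub_cycle.
Qed.

Section GlueForests.
Variables (T : finType) (e t : rel T) (S : {pred T}).
Hypothesis t_in_S : forall x y, t x y -> (x \in S) && (y \in S).
Hypothesis S_disconnected : {in S &, forall u w, connect e u w -> u = w}.

Local Notation et := (relU e t).

Lemma path_relU_to_S a r : path et a r -> r != [::] -> ~~ t a (head a r) ->
  last a r \in S -> exists2 b, b \in r & (b \in S) && connect e a b.
Proof.
elim: r a => // c r IH a /= /andP [ac cr] _ not_tac lastS.
have eac : e a c by case/orP: ac => // tac; rewrite tac in not_tac.
case cS: (c \in S); first by exists c; rewrite ?mem_head // cS connect1.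
case: r IH cr lastS => [|d r] IH cr lastS; first by rewrite /= cS in lastS.
have not_tcd : ~~ t c d by apply/negP => /t_in_S; rewrite cS.
have [b br /andP [bS cb]] := IH c cr isT not_tcd lastS.
exists b; first by rewrite inE br orbT.
by rewrite bS (connect_trans (connect1 eac) cb).
Qed.

(* The cycle leaves y through a [t]-edge to x; if it then left x through an
   [e]-edge it would have to re-enter [S] through [e]-edges only, i.e. x would
   be [e]-connected to another node of [S]. *)
Lemma cycle_relU_next_t p y : uniq p -> cycle et p -> y \in p ->
  t y (next p y) -> t (next p y) (next p (next p y)).
Proof.
move=> up cp /rot_to [i l E]; rewrite -!(next_rot i up) E.
have : uniq (y :: l) by rewrite -E rot_uniq.
have : cycle et (y :: l) by rewrite -E rot_cycle.
case: l {E} => [|x l] /=; first by move=> _ _; rewrite !eqxx.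
move=> /andP [_ path_xly] /and3P [+ xl _]; rewrite inE negb_or => /andP [yx yl].
have next_x : next_at x y x l = head y l.
  by case: l {path_xly yl xl} => /=; rewrite eqxx.
rewrite eqxx eq_sym (negbTE yx) next_x => tyx; apply/negPn/negP => not_tx.
have /andP [yS xS] := t_in_S tyx.
have [||| b] := path_relU_to_S path_xly.
- by rewrite -size_eq0 size_rcons.
- by case: (l) not_tx.
- by rewrite last_rcons.
rewrite mem_rcons inE => b_yl /andP [bS /(S_disconnected xS bS) xb].
by move: b_yl; rewrite -xb eq_sym (negbTE yx) (negbTE xl).
Qed.

Lemma cycle_relU_t p y : uniq p -> cycle et p -> y \in p -> t y (next p y) ->
  cycle t p.
Proof.
move=> up cp yp tyn; apply: cycle_from_next => // z.
rewrite -(fconnect_cycle (cycle_next up) yp) => /connectP [r].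
elim: r y yp tyn => [|c r IH] y yp tyn /=; first by move=> _ ->.
move=> /andP [/eqP <- nr]; apply: IH nr; first by rewrite mem_next.
exact: cycle_relU_next_t.
Qed.

Lemma forest_relU : forest e -> forest t -> forest et.
Proof.
move=> e_forest t_forest p up p_gt2; apply/negP => cp.
have [/hasP [y yp tyn] | /hasPn not_t] := boolP (has (fun y => t y (next p y)) p).
  by have := t_forest p up p_gt2; rewrite (cycle_relU_t up cp yp tyn).
have := e_forest p up p_gt2; apply/negP/negPn; apply: cycle_from_next => // y yp.
by have /orP [] := next_cycle cp yp; rewrite ?(negbTE (not_t y yp)).
Qed.

End GlueForests.

Section Dash.
Variables (T : finType) (R : realType) (G0 : rel T) (id0 : T -> R).
Hypothesis id0_inj : injective id0.
Implicit Types (s : state T R) (x y u w : T).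

Lemma adjGp_sym s : (forall x y, (x, y) \in healed s -> (y, x) \in healed s) ->
  symmetric (adjGp s).
Proof.
move=> healed_sym x y; apply/idP/idP => /and3P [xa ya xy];
  by rewrite /adjGp xa ya healed_sym.
Qed.

Definition dash_invariant s :=
  [/\ forall x y, (x, y) \in healed s -> (y, x) \in healed s,
      forall x, (x, x) \notin healed s,
      forall x y, connect (adjGp s) x y -> cid s x = cid s y &
      forest (adjGp s)].

Lemma dash_invariant_init : dash_invariant (init_state id0).
Proof.
have no_edge x y : adjGp (init_state id0) x y = false.
  by rewrite /adjGp /= in_set0 !andbF.
split=> [x y|x|x y|p _]; rewrite ?inE //.
- by move/connectP => [[|a r] /=]; [move=> _ -> | rewrite no_edge].
- by case: p => [|a [|b p]] //= _; rewrite no_edge.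
Qed.

Section Step.
Variables (s s' : state T R) (v : T) (q : seq T).
Hypotheses (healed_sym : forall x y, (x, y) \in healed s -> (y, x) \in healed s)
  (healed_irr : forall x, (x, x) \notin healed s)
  (cid_connect : forall x y, connect (adjGp s) x y -> cid s x = cid s y)
  (forest_s : forest (adjGp s)).
Hypotheses (uq : uniq q) (qS : [set x in q] = Sset G0 id0 s v)
  (alive_s' : alive s' = alive s :\ v)
  (healed_s' : healed s' = healed s :|: tree_edges q).
Hypothesis cid_s' : forall x,
  if [exists u in Sset G0 id0 s v, connect (adjGp s') u x]
  then exists2 m, m \in Sset G0 id0 s v &
     (cid s' x = cid s m /\
      forall u, u \in Sset G0 id0 s v -> (cid s m <= cid s u)%R)
  else cid s' x = cid s x.

Local Notation S := (Sset G0 id0 s v).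
Local Notation UNv := (UN G0 id0 s v).
Let Tr := fun x y => (x, y) \in tree_edges q.
Let H := [rel x y | [&& x != v, y != v & adjGp s x y]].

Lemma mem_Sset u : (u \in S) = (u \in UNv) || adjGp s v u.
Proof. by rewrite /Sset in_setU /nbrGp inE. Qed.

Lemma Tr_Sset x y : Tr x y -> (x \in S) && (y \in S).
Proof. by move=> /tree_edges_mem; rewrite -qS !inE. Qed.

Lemma UN_cid_neq u : u \in UNv -> cid s u != cid s v.
Proof. by rewrite inE => /and3P []. Qed.

Lemma UN_cid_inj : {in UNv &, forall u w, cid s u = cid s w -> u = w}.
Proof.
move=> u w /setIdP [un /andP [_ /forall_inP u_min]].
move=> /setIdP [wn /andP [_ /forall_inP w_min]] cuw.
apply: id0_inj; apply/eqP; rewrite eq_le.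
by move: (u_min w wn) (w_min u un); rewrite cuw eqxx /= => -> ->.
Qed.

Lemma H_path_notin a r : path H a r -> v \notin r.
Proof.
elim: r a => // b r IH a /= /andP [/and3P [_ bv _] br].
by rewrite inE negb_or eq_sym bv (IH b br).
Qed.

Lemma connect_H_cid x y : connect H x y -> cid s x = cid s y.
Proof.
by move=> cxy; apply: cid_connect; apply: connect_sub cxy => a b /and3P [_ _ /connect1].
Qed.

(* Two distinct G'-neighbours of v joined by a path avoiding v close a cycle
   through v. *)
Lemma nbrGp_disconnected u w : adjGp s v u -> adjGp s v w -> connect H u w -> u = w.
Proof.
move=> vu vw /connectP [r pr w_last]; subst w.
case: (shortenP pr) vw => {r pr} r' pr' ur' _ vw.
apply/eqP; apply: contraT => u_neq_last.
have r'_gt0 : 0 < size r'.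
  by case: r' u_neq_last {pr' ur' vw} => //=; rewrite eqxx.
have vu_neq : v != u by case/and3P: vu => _ _; apply: contraTneq => ->.
have := forest_s (p := v :: u :: r').
rewrite /= inE negb_or vu_neq (H_path_notin pr'); move: ur' => /= ->.
rewrite !ltnS r'_gt0 rcons_path vu (adjGp_sym healed_sym) vw andbT.
have -> : path (adjGp s) u r' by apply: sub_path pr' => a b /and3P [].
by move/(_ isT isT).
Qed.

(* Within UN(v,G) the current IDs are pairwise distinct and differ from that
   of v, whereas the G'-neighbours of v share the ID of v. *)
Lemma Sset_disconnected : {in S &, forall u w, connect H u w -> u = w}.
Proof.
have cid_vu u : adjGp s v u -> cid s u = cid s v by move/connect1/cid_connect.
move=> u w; rewrite !mem_Sset => /orP [uU|vu] /orP [wU|vw].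
all: move=> /[dup] cuw /connect_H_cid.
- exact: UN_cid_inj.
- by rewrite (cid_vu w vw) => cu; move: (UN_cid_neq uU); rewrite cu eqxx.
- by rewrite (cid_vu u vu) => cw; move: (UN_cid_neq wU); rewrite -cw eqxx.
- by move=> _; apply: nbrGp_disconnected.
Qed.

Lemma adjGp_step_sub : subrel (adjGp s') (relU H Tr).
Proof.
move=> x y /and3P [xa ya]; rewrite healed_s' in_setU => /orP [xy|xy] /=.
  move: xa ya; rewrite alive_s' !in_setD1 => /andP [-> xa] /andP [-> ya].
  by rewrite /adjGp xa ya xy.
by rewrite /Tr xy orbT.
Qed.

Lemma forest_step : forest (adjGp s').
Proof.
apply: forest_sub adjGp_step_sub _; apply: forest_relU.
- exact: Tr_Sset.
- exact: Sset_disconnected.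
- by apply: forest_sub forest_s => x y /and3P [].
- exact: tree_edges_forest.
Qed.

Lemma healed_sym_step x y : (x, y) \in healed s' -> (y, x) \in healed s'.
Proof.
by rewrite healed_s' !in_setU => /orP [/healed_sym | /tree_edges_sym] ->; rewrite ?orbT.
Qed.

Lemma healed_irr_step x : (x, x) \notin healed s'.
Proof. by rewrite healed_s' in_setU negb_or healed_irr tree_edges_irr. Qed.

Let touched x := [exists u in S, connect (adjGp s') u x].

Lemma touched_connect x y : connect (adjGp s') x y -> touched x = touched y.
Proof.
have sym := sym_connect_sym (adjGp_sym healed_sym_step).
suff imp a b : connect (adjGp s') a b -> touched a -> touched b.
  by move=> cxy; apply/idP/idP; apply: imp; rewrite // sym.
move=> cab /exists_inP [u uS ua]; apply/exists_inP; exists u => //.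
exact: connect_trans cab.
Qed.

(* An untouched node is not in S, hence incident to no edge of the new tree. *)
Lemma untouched_path x r : ~~ touched x -> path (adjGp s') x r -> path (adjGp s) x r.
Proof.
elim: r x => //= y r IH x x_untouched /andP [xy yr].
have y_untouched : ~~ touched y by rewrite -(touched_connect (connect1 xy)).
rewrite (IH y y_untouched yr) andbT.
have /orP [/and3P [_ _ //] | /Tr_Sset /andP [xS _]] := adjGp_step_sub xy.
move: x_untouched; rewrite /touched; apply: contraNT => _.
by apply/exists_inP; exists x.
Qed.

Lemma cid_connect_step x y : connect (adjGp s') x y -> cid s' x = cid s' y.
Proof.
move=> cxy; have := cid_s' x; have := cid_s' y.
rewrite -/(touched x) -/(touched y) -(touched_connect cxy).
case: ifP => [_ [m2 m2S [-> m2_min]] [m1 m1S [-> m1_min]] | x_untouched -> ->].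
  by apply/eqP; rewrite eq_le m1_min // m2_min.
apply: cid_connect; case/connectP: cxy => r xr ->; apply/connectP; exists r => //.
by apply: untouched_path xr; rewrite x_untouched.
Qed.

End Step.

Lemma dash_invariant_step s s' : dash_invariant s -> dash_step G0 id0 s s' ->
  dash_invariant s'.
Proof.
move=> [healed_sym healed_irr cid_connect forest_s].
move=> [v [q [[_ uq qS _] [alive_s' healed_s' cid_s']]]].
split.
- exact: healed_sym_step healed_s'.
- exact: healed_irr_step healed_irr uq healed_s'.
- exact: cid_connect_step healed_sym cid_connect qS alive_s' healed_s' cid_s'.
- exact: forest_step healed_sym healed_irr cid_connect forest_s uq qS alive_s'
    healed_s'.
Qed.

Lemma reachable_dash_invariant s : reachable G0 id0 s -> dash_invariant s.
Proof.
elim=> [|s1 s2 _ inv_s1 /(dash_invariant_step inv_s1) //].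
exact: dash_invariant_init.
Qed.

End Dash.

Local Open Scope ring_scope.

Theorem lemma1 (T : finType) (R : realType) (G0 : rel T) (id0 : T -> R) :
  symmetric G0 -> irreflexive G0 ->
  (forall x y : T, connect G0 x y) ->
  injective id0 -> (forall x : T, 0 <= id0 x <= 1) ->
  forall s : state T R, reachable G0 id0 s -> forest (adjGp s).
Proof.
move=> _ _ _ id0_inj _ s /(reachable_dash_invariant id0_inj).
by case.
Qed.
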